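(* Let $\mathscr{X}$ be a totally bounded normed metric space, consider a channel with transition mapping $N$ as described in the context, and let $0\le\delta<m_{\mathscr{Y}}(V_N)$. Then $$C^\delta_N=\sup\Big\{ I_{\tilde\delta/|[\![X]\!]|}(Y;X)\ :\ \tilde\delta\ge0,\ X\in\mathscr{F}_{\tilde\delta},\ \tilde\delta\le \delta/m_{\mathscr{Y}}([\![Y]\!])\Big\}\ \text{bits},$$ where $Y$ is the received UV corresponding to the transmitted UV $X$.
   Context: Uncertain variables (UVs): a UV is a map $U$ from a sample space $\Omega$ to a set; jointly considered UVs share $\Omega$. $[\![U]\!]=\{U(\omega)\}$; $[\![U|w]\!]=\{U(\omega):W(\omega)=w\}$, $[\![U|W]\!]=\{[\![U|w]\!]:w\in[\![W]\!]\}$. An uncertainty function on a set $\mathscr{U}$ is a map $m$ on subsets of $\mathscr{U}$ with $m(\emptyset)=0$, $0<m(S)<\infty$ for nonempty $S$, $\max\{m(S_1),m(S_2)\}\le m(S_1\cup S_2)$. Association: with uncertainty functions $m_{\mathscr{X}},m_{\mathscr{Y}}$ on the value sets of $X,Y$, $\mathscr{A}(X;Y)=\{m_{\mathscr{X}}([\![X|y_1]\!]\cap[\![X|y_2]\!])/m_{\mathscr{X}}([\![X]\!]):y_1\ne y_2\in[\![Y]\!]\}\setminus\{0\}$, $\mathscr{A}(Y;X)=\{m_{\mathscr{Y}}([\![Y|x_1]\!]\cap[\![Y|x_2]\!])/m_{\mathscr{Y}}([\![Y]\!]):x_1\ne x_2\in[\![X]\!]\}\setminus\{0\}$. $\mathscr{A}\succ\delta$: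 all elements $>\delta$ (false for $\emptyset$); $\mathscr{A}\preceq\delta$: all elements $\le\delta$ (true for $\emptyset$). $(X,Y)\stackrel{d}{\leftrightarrow}(\delta_1,\delta_2)$ iff $\mathscr{A}(X;Y)\succ\delta_1,\mathscr{A}(Y;X)\succ\delta_2$; $(X,Y)\stackrel{a}{\leftrightarrow}(\delta_1,\delta_2)$ iff $\mathscr{A}(X;Y)\preceq\delta_1,\mathscr{A}(Y;X)\preceq\delta_2$. $\delta$-mutual information: for UVs $U$ (values in $\mathscr{U}$ with uncertainty function $m_{\mathscr{U}}$) and $W$, points $u,u'\in[\![U]\!]$ are $\delta$-connected via $[\![U|W]\!]$ if there are $w_1,\dots,w_N\in[\![W]\!]$ with $u\in[\![U|w_1]\!]$, $u'\in[\![U|w_N]\!]$, $m_{\mathscr{U}}([\![U|w_i]\!]\cap[\![U|w_{i-1}]\!])/m_{\mathscr{U}}([\![U]\!])>\delta$ for $1<i\le N$; a set is $\delta$-connected if all pairs of its points are. A $\delta$-overlap family $[\![U|W]\!]^*_\delta$ is a family of distinct subsets covering $[\![U]\!]$, of largest cardinality among covering families such that (i) each member is $\delta$-connected and contains some $[\![U|w]\!]$; (ii) distinct members $S_1,S_2$ satisfy $m_{\mathscr{U}}(S_1\cap S_2)\le\delta\, m_{\mathscr{U}}([\![U]\!])$; (iii) each $[\![U|w]\!]$ lies in some member. $I_\delta(U;W)=\log_2|[\![U|W]\!]^*_\delta|$ if such a family exists, else $0$. Channel: $\mathscr{Y}$ is the output set, $N$ maps each $x\in\mathscr{X}$ to a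 set $N(x)\subseteq\mathscr{Y}$ (the possible received points, $S_N(x)=N(x)$); $m_{\mathscr{X}},m_{\mathscr{Y}}$ are uncertainty functions on $\mathscr{X},\mathscr{Y}$ with $m_{\mathscr{Y}}(\mathscr{Y})=1$. $V_N=N(x^* )$ where $x^*$ minimizes $m_{\mathscr{Y}}(N(x))$ over $\mathscr{X}$. A codebook is a discrete set $\mathcal{C}\subseteq\mathscr{X}$; $e_N(x_1,x_2)=m_{\mathscr{Y}}(N(x_1)\cap N(x_2))/m_{\mathscr{Y}}(\mathscr{Y})$; $\mathcal{C}$ is $(N,\delta)$-distinguishable if $e_N(x_1,x_2)\le\delta/|\mathcal{C}|$ for all distinct $x_1,x_2\in\mathcal{C}$; $C^\delta_N=\sup\log_2|\mathcal{C}|$ over $(N,\delta)$-distinguishable codebooks. For a codebook $\mathcal{C}$, the transmitted UV $X$ and received UV $Y$ satisfy $[\![X]\!]=\mathcal{C}$, $[\![Y]\!]=\bigcup_{x\in\mathcal{C}}N(x)$, $[\![Y|x]\!]=\{y\in[\![Y]\!]:y\in N(x)\}$, $[\![X|y]\!]=\{x\in[\![X]\!]:y\in N(x)\}$. Feasible set: $\mathscr{F}_\delta$ is the set of transmitted UVs $X$ with $[\![X]\!]\subseteq\mathscr{X}$ a codebook such that either $(X,Y)\stackrel{d}{\leftrightarrow}(0,\delta/|[\![X]\!]|)$ or $(X,Y)\stackrel{a}{\leftrightarrow}(1,\delta/|[\![X]\!]|)$. *)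

From HB Require Import structures.
From mathcomp Require Import all_boot all_order all_algebra.
From mathcomp Require Import finmap.
From mathcomp Require Import all_classical all_reals all_analysis.
Set Implicit Arguments. Unset Strict Implicit. Unset Printing Implicit Defensive.
Import Order.TTheory GRing.Theory Num.Theory.
Import numFieldNormedType.Exports.
Local Open Scope classical_set_scope.
Local Open Scope ring_scope.


Section Defs.
Variable R : realType.

Definition log2 (x : R) : R := ln x / ln 2.

Definition totally_bounded_set {T : pseudoMetricType R} (A : set T) : Prop :=
  forall e : R, 0 < e ->
    exists F : {fset T}, A `<=` \bigcup_(f in [set` F]) ball f e.

Definition uncertainty_fun {U : Type} (D : set U) (m : set U -> R) : Prop :=
  [/\ m set0 = 0,
      (forall S, S `<=` D -> S !=set0 -> 0 < m S) &
      (forall S1 S2, S1 `<=` D -> S2 `<=` D ->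
          Num.max (m S1) (m S2) <= m (S1 `|` S2))].

(* ---- delta-mutual information I_delta(U;W) ----
   rngU = [[U]], rngW = [[W]], cond w = [[U|w]], mU uncertainty function. *)
Section DeltaMI.
Variables (U W : Type) (rngU : set U) (rngW : set W) (cond : W -> set U)
  (mU : set U -> R) (delta : R).

Definition dconn (u u' : U) : Prop :=
  exists (n : nat) (w : nat -> W),
    (forall i, (i <= n)%N -> rngW (w i)) /\
    cond (w 0%N) u /\ cond (w n) u' /\
    (forall i, (0 < i <= n)%N ->
       mU (cond (w i) `&` cond (w i.-1)) / mU rngU > delta).

Definition dconnected (S : set U) : Prop :=
  forall u u', S u -> S u' -> dconn u u'.

Definition overlap_family (n : nat) (F : 'I_n -> set U) : Prop :=
  [/\ injective F,
      (forall i, F i `<=` rngU) /\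
      rngU `<=` \bigcup_(i in [set: 'I_n]) F i,
      (forall i, dconnected (F i) /\ exists w, rngW w /\ cond w `<=` F i),
      (forall i j, i <> j -> mU (F i `&` F j) <= delta * mU rngU) &
      (forall w, rngW w -> exists i, cond w `<=` F i)].

Definition overlap_card (n : nat) : Prop :=
  (exists F : 'I_n -> set U, overlap_family F) /\
  (forall (n' : nat) (G : 'I_n' -> set U), overlap_family G -> (n' <= n)%N).

Definition Idelta : R :=
  match pselect (exists n, overlap_card n) with
  | left _ => log2 (xget 0%N overlap_card)%:R
  | right _ => 0
  end.
End DeltaMI.

Section Channel.
Variables (V : normedModType R) (Y : Type) (N : V -> set Y).

(* For a codebook C: [[Y]], [[Y|x]] = N x, [[X|y]] *)
Definition rngY (C : {fset V}) : set Y := \bigcup_(x in [set` C]) N x.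
Definition condX (C : {fset V}) (y : Y) : set V := [set x | x \in C /\ N x y].

Definition codebook (Xs : set V) (C : {fset V}) : Prop :=
  C != fset0 /\ [set` C] `<=` Xs.

Definition cardR (C : {fset V}) : R := (#|` C|)%fset%:R.

Definition eN (mY : set Y -> R) (x1 x2 : V) : R := mY (N x1 `&` N x2) / mY setT.

Definition distinguishable (mY : set Y -> R) (delta : R) (C : {fset V}) :=
  forall x1 x2, x1 \in C -> x2 \in C -> x1 <> x2 -> eN mY x1 x2 <= delta / cardR C.

Definition capacity (Xs : set V) (mY : set Y -> R) (delta : R) : \bar R :=
  ereal_sup [set (log2 (cardR C))%:E | C in
              [set C | codebook Xs C /\ distinguishable mY delta C]].

Definition assocXY (mX : set V -> R) (C : {fset V}) : set R :=
  [set r | exists y1 y2, rngY C y1 /\ rngY C y2 /\ y1 <> y2 /\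
      r = mX (condX C y1 `&` condX C y2) / mX [set` C]] `\ 0.
Definition assocYX (mY : set Y -> R) (C : {fset V}) : set R :=
  [set r | exists x1 x2, x1 \in C /\ x2 \in C /\ x1 <> x2 /\
      r = mY (N x1 `&` N x2) / mY (rngY C)] `\ 0.

Definition succ_set (A : set R) (d : R) : Prop := A !=set0 /\ forall r, A r -> d < r.
Definition preceq_set (A : set R) (d : R) : Prop := forall r, A r -> r <= d.

(* X (with [[X]] = C) belongs to the feasible set F_dt *)
Definition feasible (Xs : set V) (mX : set V -> R) (mY : set Y -> R) (dt : R)
    (C : {fset V}) : Prop :=
  codebook Xs C /\
  ((succ_set (assocXY mX C) 0 /\ succ_set (assocYX mY C) (dt / cardR C)) \/
   (preceq_set (assocXY mX C) 1 /\ preceq_set (assocYX mY C) (dt / cardR C))).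

(* I_delta(Y;X) for the transmitted UV with [[X]] = C *)
Definition IYX (mY : set Y -> R) (delta : R) (C : {fset V}) : R :=
  Idelta (rngY C) [set` C] N mY delta.

End Channel.
End Defs.

From HB Require Import structures.
From mathcomp Require Import all_boot all_order all_algebra.
From mathcomp Require Import finmap.
From mathcomp Require Import all_classical all_reals all_analysis.
Import Order.TTheory GRing.Theory Num.Theory.
Local Open Scope classical_set_scope.
Local Open Scope ring_scope.
Set Implicit Arguments. Unset Strict Implicit.

(* Since delta < m(V_N), every overlap allowed between two members of a
   delta-overlap family of [[Y|X]] is smaller than any noise set N(x).  Each
   member contains some N(x), so distinct members contain N(x) for distinct
   codewords x; one codeword per member is then a distinguishable codebook of
   the same size, whence I <= C^delta.  Conversely, for a distinguishable
   codebook C the sets N(x), x in C, themselves form a maximal delta-overlap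
   family (a single N(x) is trivially delta-connected), so that
   dt = delta / m([[Y]]) attains log |C|. *)

Lemma uncertainty_fun_le (R : realType) (U : Type) (D : set U) (m : set U -> R)
    (A B : set U) :
  uncertainty_fun D m -> A `<=` B -> B `<=` D -> m A <= m B.
Proof.
case=> _ _ m_max AB BD; rewrite -(setUidr AB).
by apply: le_trans (m_max _ _ (subset_trans AB BD) BD); rewrite le_max lexx.
Qed.

Section DeltaMutualInformation.
Variables (R : realType) (U W : Type) (rngU : set U) (rngW : set W)
  (cond : W -> set U) (mU : set U -> R) (delta : R).

Lemma overlap_card_uniq a b :
  overlap_card rngU rngW cond mU delta a ->
  overlap_card rngU rngW cond mU delta b -> a = b.
Proof.
move=> [[Fa fa] a_max] [[Fb fb] b_max].
by apply/eqP; rewrite eqn_leq (b_max _ _ fa) (a_max _ _ fb).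
Qed.

Lemma IdeltaE n : overlap_card rngU rngW cond mU delta n ->
  Idelta rngU rngW cond mU delta = log2 n%:R.
Proof.
move=> n_card; rewrite /Idelta; case: pselect => [ex|]; last by case; exists n.
by rewrite (overlap_card_uniq (xgetPex 0%N ex) n_card).
Qed.

Lemma Idelta_nocard : ~ (exists n, overlap_card rngU rngW cond mU delta n) ->
  Idelta rngU rngW cond mU delta = 0.
Proof. by move=> no_card; rewrite /Idelta; case: pselect. Qed.

End DeltaMutualInformation.

Section Channel.
Variables (R : realType) (V : normedModType R) (Y : Type) (N : V -> set Y)
  (mY : set Y -> R).
Hypotheses (umY : uncertainty_fun setT mY) (mY1 : mY setT = 1).

Lemma eNE x1 x2 : eN N mY x1 x2 = mY (N x1 `&` N x2).
Proof. by rewrite /eN mY1 divr1. Qed.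

Lemma le_rngY (C : {fset V}) x : x \in C -> mY (N x) <= mY (rngY N C).
Proof.
by move=> xC; apply: uncertainty_fun_le umY _ (@subsetT _ _) => y Nxy; exists x.
Qed.

Section SmallOverlaps.
Variables (C : {fset V}) (m0 d : R).
Hypotheses (m0_le : forall x, x \in C -> m0 <= mY (N x))
  (d_lt : d * mY (rngY N C) < m0).

Lemma overlap_family_transversal n (G : 'I_n -> set Y) :
  overlap_family (rngY N C) [set` C] N mY d G ->
  exists w : 'I_n -> V,
    [/\ injective w, forall i, w i \in C & forall i, N (w i) `<=` G i].
Proof.
move=> [_ _ G_conn G_overlap _].
have [w Hw] := boolp.choice (fun i => (G_conn i).2).
exists w; split; [|by move=> i; case: (Hw i)..].
move=> i j wij; apply: boolp.contrapT => ij.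
have sub : N (w i) `<=` G i `&` G j.
  by move=> y Ny; split; [apply: (Hw i).2 | rewrite wij in Ny; apply: (Hw j).2].
have := le_trans (m0_le (Hw i).1) (uncertainty_fun_le umY sub (@subsetT _ _)).
by move/le_trans/(_ (G_overlap i j ij)); rewrite leNgt d_lt.
Qed.

Lemma overlap_family_card_le n (G : 'I_n -> set Y) :
  overlap_family (rngY N C) [set` C] N mY d G -> (n <= #|` C|)%N.
Proof.
case/overlap_family_transversal=> w [w_inj wC _].
have sub : ([fset w i | i : 'I_n] `<=` C)%fset.
  by apply/fsubsetP => x /imfsetP [i _ ->].
by have := fsubset_leq_card sub; rewrite card_imfset //= size_enum_ord.
Qed.

Lemma overlap_card_codebook :
  (forall x1 x2, x1 \in C -> x2 \in C -> x1 <> x2 ->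
     mY (N x1 `&` N x2) <= d * mY (rngY N C)) ->
  overlap_card (rngY N C) [set` C] N mY d #|` C|.
Proof.
move=> C_overlap; split; last by move=> n G; apply: overlap_family_card_le.
pose x (i : 'I_#|` C|) := nth 0 C i.
have xC i : x i \in C by apply: mem_nth.
have x_inj : injective x.
  by move=> i j /eqP; rewrite nth_uniq ?fset_uniq // => /eqP/val_inj.
exists (N \o x); split.
- move=> i j /= Nij; apply: x_inj; apply: boolp.contrapT => xij.
  have := C_overlap _ _ (xC i) (xC j) xij; rewrite Nij setIid.
  by move/(le_trans (m0_le (xC j))); rewrite leNgt d_lt.
- split=> [i y Ny|y [z zC Nzy]]; first by exists (x i); [apply: xC | apply: Ny].
  have zi : (index z C < #|` C|)%N by rewrite index_mem.
  by exists (Ordinal zi) => //=; rewrite /x nth_index.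
- move=> i; split; last by exists (x i); split; [apply: xC |].
  move=> u u' Nu Nu'; exists 0%N, (fun=> x i).
  by split; [move=> _ _; apply: xC | do 2!split => //; case].
- by move=> i j ij; apply: C_overlap => // /x_inj.
- move=> z zC; have zi : (index z C < #|` C|)%N by rewrite index_mem.
  by exists (Ordinal zi); rewrite /= /x nth_index.
Qed.

End SmallOverlaps.

Lemma distinguishable_transversal (C : {fset V}) (d delta : R) n
    (G : 'I_n -> set Y) (w : 'I_n -> V) :
  overlap_family (rngY N C) [set` C] N mY d G ->
  injective w -> (forall i, N (w i) `<=` G i) ->
  d * mY (rngY N C) <= delta / n%:R ->
  distinguishable N mY delta [fset w i | i : 'I_n]%fset.
Proof.
move=> [_ _ _ G_overlap _] w_inj wG le_delta.
move=> _ _ /imfsetP [i _ ->] /imfsetP [j _ ->] wij.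
have ij : i <> j by move=> eij; apply: wij; rewrite eij.
have sub : N (w i) `&` N (w j) `<=` G i `&` G j.
  by move=> y [Niy Njy]; split; [apply: wG | apply: wG].
rewrite eNE /cardR card_imfset //= size_enum_ord.
apply: le_trans (uncertainty_fun_le umY sub (@subsetT _ _)) _.
exact: le_trans (G_overlap _ _ ij) le_delta.
Qed.

Lemma assocXY_le1 (Xs : set V) (mX : set V -> R) (C : {fset V}) :
  uncertainty_fun Xs mX -> codebook Xs C -> preceq_set (assocXY N mX C) 1.
Proof.
move=> umX [/fset0Pn [x xC] CXs] _ [[y1 [y2 [_ [_ [_ ->]]]]] _].
have mC_gt0 : 0 < mX [set` C] by case: umX => _ pos _; apply: pos => //; exists x.
rewrite ler_pdivrMr // mul1r; apply: uncertainty_fun_le umX _ CXs.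
by move=> z [[] + _].
Qed.

Lemma distinguishable_feasible (Xs : set V) (mX : set V -> R) delta
    (C : {fset V}) :
  uncertainty_fun Xs mX -> codebook Xs C -> 0 < mY (rngY N C) ->
  distinguishable N mY delta C ->
  feasible N Xs mX mY (delta / mY (rngY N C)) C.
Proof.
move=> umX cbC mC_gt0 distC; split=> //; right; split.
  exact: (assocXY_le1 umX cbC).
move=> _ [[x1 [x2 [x1C [x2C [x12 ->]]]]] _].
rewrite mulrAC; apply: ler_wpM2r; first by rewrite invr_ge0 ltW.
by rewrite -eNE; apply: distC.
Qed.

Section Capacity.
Variables (Xs : set V) (xstar : V) (delta : R).
Hypotheses (Xs_xstar : Xs xstar)
  (xstar_min : forall x, Xs x -> mY (N xstar) <= mY (N x))
  (delta_ge0 : 0 <= delta) (delta_lt : delta < mY (N xstar)).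

Lemma codebook_min (C : {fset V}) :
  codebook Xs C -> forall x, x \in C -> mY (N xstar) <= mY (N x).
Proof. by move=> [_ CXs] x xC; apply/xstar_min/CXs. Qed.

Lemma rngY_gt0 (C : {fset V}) : codebook Xs C -> 0 < mY (rngY N C).
Proof.
move=> cbC; have [/fset0Pn [x xC] _] := cbC.
apply: le_lt_trans delta_ge0 (lt_le_trans delta_lt _).
exact: le_trans (codebook_min cbC xC) (le_rngY xC).
Qed.

Lemma capacity_ge0 : (0 <= capacity N Xs mY delta)%E.
Proof.
apply: ereal_sup_ubound; exists [fset xstar]%fset.
  split; first split.
  - by apply/fset0Pn; exists xstar; rewrite inE.
  - by move=> x /=; rewrite inE => /eqP ->.
  - by move=> x1 x2; rewrite !inE => /eqP -> /eqP ->.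
by rewrite /cardR cardfs1 /log2 ln1 mul0r.
Qed.

Lemma div_cardR_le (C : {fset V}) : codebook Xs C -> delta / cardR C <= delta.
Proof.
case=> C_neq0 _; rewrite ler_pdivrMr ?ltr0n ?cardfs_gt0 //.
by rewrite ler_peMr // ler1n cardfs_gt0.
Qed.

Lemma IYX_distinguishable (C : {fset V}) :
  codebook Xs C -> distinguishable N mY delta C ->
  IYX N mY (delta / mY (rngY N C) / cardR C) C = log2 (cardR C).
Proof.
move=> cbC distC; set d := _ / cardR C.
have d_rngY : d * mY (rngY N C) = delta / cardR C.
  by rewrite /d mulrAC divfK // gt_eqF // rngY_gt0.
apply: IdeltaE; apply: (overlap_card_codebook (codebook_min cbC)).
  by rewrite d_rngY (le_lt_trans (div_cardR_le cbC)).
by move=> x1 x2 x1C x2C x12; rewrite d_rngY -eNE; apply: distC.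
Qed.

Lemma IYX_le_capacity dt (C : {fset V}) :
  codebook Xs C -> 0 <= dt -> dt <= delta / mY (rngY N C) ->
  ((IYX N mY (dt / cardR C) C)%:E <= capacity N Xs mY delta)%E.
Proof.
move=> cbC dt_ge0 dt_le; set d := dt / cardR C; rewrite /IYX.
have [[n n_card]|no_card] :=
  pselect (exists n, overlap_card (rngY N C) [set` C] N mY d n); last first.
  by rewrite Idelta_nocard //; apply: capacity_ge0.
rewrite (IdeltaE n_card); have [[G G_fam] _] := n_card.
have mC_gt0 := rngY_gt0 cbC.
have d_le : d * mY (rngY N C) <= delta / cardR C.
  rewrite /d mulrAC; apply: ler_wpM2r; first by rewrite invr_ge0 ler0n.
  by rewrite -ler_pdivlMr.
have d_lt : d * mY (rngY N C) < mY (N xstar).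
  exact: le_lt_trans d_le (le_lt_trans (div_cardR_le cbC) delta_lt).
have [w [w_inj wC wG]] := overlap_family_transversal (codebook_min cbC) d_lt G_fam.
have n_le := overlap_family_card_le (codebook_min cbC) d_lt G_fam.
have [->|n_gt0] := posnP n; first by rewrite /log2 ln0 // mul0r capacity_ge0.
have card_w : #|` [fset w i | i : 'I_n]%fset| = n.
  by rewrite card_imfset //= size_enum_ord.
apply: ereal_sup_ubound; exists [fset w i | i : 'I_n]%fset; last first.
  by rewrite /cardR card_w.
split; first split.
- by rewrite -cardfs_gt0 card_w.
- by move=> _ /imfsetP [i _ ->]; apply/cbC.2/wC.
apply: distinguishable_transversal G_fam w_inj wG _.
apply: le_trans d_le _; apply: ler_wpM2l => //.
by rewrite lef_pV2 ?posrE ?ltr0n ?ler_nat // (leq_trans n_gt0).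
Qed.

End Capacity.
End Channel.

Unset Implicit Arguments. Set Strict Implicit.

Theorem theorem7 (R : realType) (V : normedModType R) (Xs : set V)
  (Y : Type) (N : V -> set Y) (mX : set V -> R) (mY : set Y -> R)
  (xstar : V) (delta : R) :
  totally_bounded_set Xs ->
  uncertainty_fun Xs mX ->
  uncertainty_fun setT mY ->
  mY setT = 1 ->
  Xs xstar -> (forall x, Xs x -> mY (N xstar) <= mY (N x)) ->
  0 <= delta -> delta < mY (N xstar) ->
  capacity N Xs mY delta =
  ereal_sup [set r : \bar R | exists (dt : R) (C : {fset V}),
     [/\ 0 <= dt, feasible N Xs mX mY dt C, dt <= delta / mY (rngY N C) &
          r = (IYX N mY (dt / cardR C) C)%:E]].
Proof.
move=> _ umX umY mY1 Xs_xstar xstar_min delta_ge0 delta_lt.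
apply/eqP; rewrite eq_le; apply/andP; split.
- apply: ereal_sup_le => _ [C [cbC distC] <-].
  have mC_gt0 := rngY_gt0 umY xstar_min delta_ge0 delta_lt cbC.
  exists (delta / mY (rngY N C)), C; split.
  + exact: divr_ge0 delta_ge0 (ltW mC_gt0).
  + exact: (distinguishable_feasible mY1 umX cbC mC_gt0 distC).
  + exact: lexx.
  + by rewrite (IYX_distinguishable umY mY1 xstar_min delta_ge0 delta_lt cbC distC).
- apply: ge_ereal_sup => _ [dt [C [dt_ge0 [cbC _] dt_le ->]]].
  exact: (IYX_le_capacity umY mY1 Xs_xstar xstar_min delta_ge0 delta_lt cbC dt_ge0 dt_le).
Qed.
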